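(* There are constants $c,C>0$ such that for all sufficiently large $n$ and all $p,q\in(0,1)$ with $\hat p=\frac{p}{p+q}\ge c\frac{\log n}{n}$, with probability at least $1-1/n$ the flooding time of the stationary edge-MEG $\mathcal{M}(n,p,q)$ is at least $C\,\frac{\log n}{\log(n\hat p)}$.
   Context: The edge-MEG $\mathcal{M}(n,p,q)=\{G_t\}$ on node set $[n]$: for each pair $e\in\binom{[n]}{2}$ there is an independent two-state Markov chain $X_t(e)\in\{0,1\}$ with $\Pr[X_{t+1}(e)=1\mid X_t(e)=0]=p$ and $\Pr[X_{t+1}(e)=0\mid X_t(e)=1]=q$; $G_t=([n],\{e:X_t(e)=1\})$. It is stationary when $G_0$ is drawn from the stationary distribution, which is the Erdős–Rényi graph $G_{n,\hat p}$, $\hat p=p/(p+q)$ (so every $G_t$ has law $G_{n,\hat p}$). Flooding from source $s$: $I_0=\{s\}$, $I_{t+1}=I_t\cup N_t(I_t)$ where $N_t(I)$ is the set of nodes outside $I$ adjacent in $G_t$ to some node of $I$; $T(s)$ is the first $t$ with $I_t=[n]$; the flooding time is $\max_s T(s)$. Logarithms are natural. *)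

From Stdlib Require Import Reals ZArith.
From mathcomp Require Import all_boot.
Set Implicit Arguments. Unset Strict Implicit. Unset Printing Implicit Defensive.

Definition Rsum_fin (T : finType) (f : T -> R) : R :=
  foldr (fun x a => Rplus (f x) a) R0 (enum T).
Definition Rprod_fin (T : finType) (f : T -> R) : R :=
  foldr (fun x a => Rmult (f x) a) R1 (enum T).
Definition Rprod_seq (T : Type) (s : seq T) (f : T -> R) : R :=
  foldr (fun x a => Rmult (f x) a) R1 s.

Definition Rltb (a b : R) : bool := if Rlt_dec a b then true else false.

(* Unordered pairs {i,j} of [n], encoded as (i,j) with i < j. *)
Definition edge (n : nat) := {e : 'I_n * 'I_n | (e.1 < e.2)%N}.

Definition graph (n : nat) := {ffun edge n -> bool}.

Definition adj (n : nat) (G : graph n) (u v : 'I_n) : bool :=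
  [exists e : edge n, G e && ((val e == (u, v)) || (val e == (v, u)))].

Definition empty_graph (n : nat) : graph n := [ffun _ => false].

Definition traj (n H : nat) := {ffun 'I_H.+1 -> graph n}.

Definition Gat (n H : nat) (tr : traj n H) (t : nat) : graph n :=
  match @insub nat (fun k => (k < H.+1)%N) 'I_H.+1 t with
  | Some i => tr i
  | None => empty_graph n
  end.

Fixpoint flood (n H : nat) (tr : traj n H) (s : 'I_n) (t : nat) : {set 'I_n} :=
  match t with
  | 0 => [set s]
  | t'.+1 =>
      let I := flood tr s t' in
      I :|: [set v | (v \notin I) && [exists u in I, adj (Gat tr t') u v]]
  end.

Definition phat (p q : R) : R := Rdiv p (Rplus p q).

Definition init_prob (p q : R) (b : bool) : R :=
  if b then phat p q else Rminus R1 (phat p q).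

Definition trans_prob (p q : R) (a b : bool) : R :=
  match a, b with
  | false, true => p
  | false, false => Rminus R1 p
  | true, false => q
  | true, true => Rminus R1 q
  end.

(* Probability of the trajectory G_0..G_H in the stationary edge-MEG M(n,p,q):
   independent chains on all pairs, each started from its stationary law. *)
Definition traj_weight (n H : nat) (p q : R) (tr : traj n H) : R :=
  Rprod_fin (fun e : edge n =>
    Rmult (init_prob p q (Gat tr 0 e))
     (Rprod_seq (iota 0 H) (fun t => trans_prob p q (Gat tr t e) (Gat tr t.+1 e)))).

Definition Prob (n H : nat) (p q : R) (E : traj n H -> bool) : R :=
  Rsum_fin (fun tr : traj n H => if E tr then traj_weight p q tr else R0).

(* Event "flooding time >= x" (x real): for some source s, no time t < x has
   I_t(s) = [n], i.e. max_s T(s) >= x (T(s) possibly infinite). *)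
Definition flood_time_ge (n H : nat) (x : R) (tr : traj n H) : bool :=
  [exists s : 'I_n, [forall t : 'I_H.+1,
     Rltb (INR t) x ==> (flood tr s t != [set: 'I_n])]].

(* Horizon H = up x >= every integer t < x, so the event only involves G_0..G_H. *)
Definition flood_time_ge_prob (n : nat) (p q x : R) : R :=
  Prob (H := Z.to_nat (up x)) p q (@flood_time_ge n (Z.to_nat (up x)) x).

From Pilot Require Import Defs.
From Stdlib Require Import Reals.
From mathcomp Require Import all_boot.
Local Open Scope R_scope.
From Stdlib Require Import Lra Lia.
From Stdlib Require ZArith.Znat.
From mathcomp Require Import all_order all_algebra Rstruct ring.
Set Implicit Arguments. Unset Strict Implicit. Unset Printing Implicit Defensive.
Import Order.TTheory GRing.Theory Num.Theory.

(* Let mu = n phat be the expected degree.  If at every time t < H every node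
   has fewer than D neighbours, the set informed from any source grows by a
   factor at most D per step, so |I_t| <= D^t < n for all t < x, and flooding
   takes at least x steps.  A node of degree >= D at time t is the centre of a
   star of D present edges; for fixed (t, v, S) this has probability phat^D,
   since the pairs evolve as independent two-state Markov chains started from
   their stationary law, so that each pair is an edge at time t with
   probability phat.  A union bound over the H n C(n, D) stars gives
   P(flooding time >= x) >= 1 - H n C(n, D) phat^D.  With D ~ 9 mu,
   x = ln n / (2 ln mu) and H ~ x, the estimate C(n, D) phat^D <= 3^-D <= n^-9
   makes the failure probability at most 1/n. *)

Local Open Scope ring_scope.

Section MarkovPaths.
Variables (K : comPzRingType) (T : finType) (s0 : T).

Definition path_at (k : nat) (y : {ffun 'I_k -> T}) (t : nat) : T :=
  if (insub t : option 'I_k) is Some i then y i else s0.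

Definition path_cons (k : nat) (b : T) (z : {ffun 'I_k -> T}) : {ffun 'I_k.+1 -> T} :=
  [ffun i : 'I_k.+1 => if unlift ord0 i is Some j then z j else b].

Lemma path_at_cons0 k b (z : {ffun 'I_k -> T}) : path_at (path_cons b z) 0 = b.
Proof.
rewrite /path_at; case: (insubP _ 0) => [i _ vi | //].
have -> : i = ord0 by apply: val_inj.
by rewrite ffunE unlift_none.
Qed.

Lemma path_at_consS k b (z : {ffun 'I_k -> T}) t : path_at (path_cons b z) t.+1 = path_at z t.
Proof.
rewrite /path_at; case: (insubP _ t.+1) => [i Hi vi | ni];
  case: (insubP _ t) => [j Hj vj | nj] //=.
- have -> : i = lift ord0 j by apply: val_inj; rewrite vi /= vj.
  by rewrite ffunE liftK.
- by move: Hi nj; rewrite ltnS => ->.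
- by move: Hj ni; rewrite ltnS => ->.
Qed.

Lemma sum_path_cons k (F : {ffun 'I_k.+1 -> T} -> K) :
  \sum_(y : {ffun 'I_k.+1 -> T}) F y = \sum_(b : T) \sum_(z : {ffun 'I_k -> T}) F (path_cons b z).
Proof.
rewrite pair_big /= (reindex (fun bz : T * {ffun 'I_k -> T} => path_cons bz.1 bz.2)) //=.
exists (fun y : {ffun 'I_k.+1 -> T} => (y ord0, [ffun j => y (lift ord0 j)])).
- move=> [b z] _ /=; congr (_, _); first by rewrite ffunE unlift_none.
  by apply/ffunP => j; rewrite !ffunE liftK.
- move=> y _ /=; apply/ffunP => i; rewrite ffunE.
  by case: (unliftP ord0 i) => [j -> | ->]; rewrite ?ffunE.
Qed.

Lemma sum_path0 (F : {ffun 'I_0 -> T} -> K) z : \sum_(y : {ffun 'I_0 -> T}) F y = F z.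
Proof.
rewrite (big_pred1 z) // => y; apply/esym/eqP/ffunP => i; case: i => ? //.
Qed.

Variable m : T -> T -> K.

Definition path_weight (a : T -> K) (k : nat) (y : {ffun 'I_k.+1 -> T}) : K :=
  a (path_at y 0) * \prod_(0 <= t < k) m (path_at y t) (path_at y t.+1).

Lemma path_weight_cons a k b (z : {ffun 'I_k.+1 -> T}) :
  path_weight a (path_cons b z) = a b * path_weight (m b) z.
Proof.
rewrite /path_weight big_nat_recl // path_at_cons0 path_at_consS.
under eq_bigr do rewrite !path_at_consS.
by rewrite mulrA.
Qed.

Lemma path_weight_mix (I : finType) (a : I -> K) (b : I -> T -> K) k (y : {ffun 'I_k.+1 -> T}) :
  \sum_(i : I) a i * path_weight (b i) y = path_weight (fun s => \sum_i a i * b i s) y.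
Proof. by rewrite /path_weight mulr_suml; apply: eq_bigr => i _; rewrite mulrA. Qed.

Hypothesis m_stochastic : forall s, \sum_(s' : T) m s s' = 1.

Lemma path_mass a k : \sum_(y : {ffun 'I_k.+1 -> T}) path_weight a y = \sum_(s : T) a s.
Proof.
elim: k a => [|k IH] a; rewrite sum_path_cons; apply: eq_bigr => s _.
  rewrite (sum_path0 _ [ffun i => s]) /path_weight big_nil path_at_cons0.
  by rewrite mulr1.
under eq_bigr do rewrite path_weight_cons.
by rewrite -big_distrr /= IH m_stochastic mulr1.
Qed.

Variable a : T -> K.
Hypothesis a_stationary : forall s', \sum_(s : T) a s * m s s' = a s'.

Lemma path_marginal (f : T -> K) j k : (j <= k)%N ->
  \sum_(y : {ffun 'I_k.+1 -> T}) path_weight a y * f (path_at y j) = \sum_(s : T) a s * f s.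
Proof.
elim: j k => [|j IH] k jk.
  rewrite -(path_mass _ k); apply: eq_bigr => y _.
  by rewrite /path_weight mulrAC.
case: k jk => [//|k] jk.
rewrite sum_path_cons exchange_big /= -(IH k jk); apply: eq_bigr => z _.
under eq_bigr do rewrite path_weight_cons path_at_consS.
rewrite -mulr_suml path_weight_mix; congr (_ * _).
by rewrite /path_weight; congr (_ * _); rewrite a_stationary.
Qed.

End MarkovPaths.

Lemma R0_zero : R0 = 0. Proof. by []. Qed.
Lemma R1_one : R1 = 1. Proof. by []. Qed.

Lemma Rsum_finE (I : finType) (f : I -> R) : Rsum_fin f = \sum_(i : I) f i.
Proof. by rewrite /Rsum_fin -big_enum /= unlock /reducebig; elim: (enum I) => //= x s ->. Qed.

Lemma Rprod_finE (I : finType) (f : I -> R) : Rprod_fin f = \prod_(i : I) f i.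
Proof. by rewrite /Rprod_fin -big_enum /= unlock /reducebig; elim: (enum I) => //= x s ->. Qed.

Lemma Rprod_seqE (I : Type) (s : seq I) (f : I -> R) : Rprod_seq s f = \prod_(i <- s) f i.
Proof. by rewrite /Rprod_seq unlock /reducebig; elim: s => //= x s ->. Qed.

Lemma Rltb_lt (a b : R) : Defs.Rltb a b -> Rlt a b.
Proof. by rewrite /Defs.Rltb; case: Rlt_dec. Qed.

Section EdgeMEG.
Variables p q : R.

Notation pair_weight := (path_weight false (trans_prob p q) (init_prob p q)).

Lemma trans_stochastic b : \sum_(b' : bool) trans_prob p q b b' = 1.
Proof. by rewrite big_bool; case: b => /=; rewrite R1_one RminusE; ring. Qed.

Lemma init_stationary : p + q != 0 -> forall b',
  \sum_(b : bool) init_prob p q b * trans_prob p q b b' = init_prob p q b'.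
Proof.
by move=> pq0 b'; rewrite big_bool /init_prob /phat; case: b' => /=;
  rewrite ?R1_one ?RminusE ?RdivE ?RplusE; field.
Qed.

Lemma pair_mass H : \sum_(y : {ffun 'I_H.+1 -> bool}) pair_weight y = 1.
Proof.
rewrite path_mass; last exact: trans_stochastic.
by rewrite big_bool /init_prob R1_one RminusE /= subrKC.
Qed.

Lemma pair_marginal H t : p + q != 0 -> (t <= H)%N ->
  \sum_(y : {ffun 'I_H.+1 -> bool}) (if path_at false y t then pair_weight y else 0) = phat p q.
Proof.
move=> pq0 tH.
have := path_marginal false trans_stochastic (init_stationary pq0) (fun b : bool => if b then 1 else 0) tH.
rewrite big_bool /= mulr1 mulr0 addr0 => <-.
by apply: eq_bigr => y _; case: ifP; rewrite ?mulr1 ?mulr0.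
Qed.

Variables n H : nat.

Definition edge_path (tr : traj n H) (e : edge n) : {ffun 'I_H.+1 -> bool} :=
  [ffun i => tr i e].

Lemma Gat_edge_path (tr : traj n H) t e : Gat tr t e = path_at false (edge_path tr e) t.
Proof. by rewrite /Gat /path_at; case: insub => [i|] //=; rewrite ffunE. Qed.

Lemma traj_weightE (tr : traj n H) :
  traj_weight p q tr = \prod_(e : edge n) pair_weight (edge_path tr e).
Proof.
rewrite /traj_weight Rprod_finE; apply: eq_bigr => e _.
rewrite Rprod_seqE /path_weight /index_iota subn0 Gat_edge_path; congr (_ * _).
by apply: eq_bigr => t _; rewrite !Gat_edge_path.
Qed.

Definition traj_of_paths (M : {ffun edge n -> {ffun 'I_H.+1 -> bool}}) : traj n H :=
  [ffun i => [ffun e => M e i]].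

Lemma edge_path_of_paths M e : edge_path (traj_of_paths M) e = M e.
Proof. by apply/ffunP => i; rewrite !ffunE. Qed.

Lemma sum_traj (F : traj n H -> R) :
  \sum_(tr : traj n H) F tr = \sum_(M : {ffun edge n -> {ffun 'I_H.+1 -> bool}}) F (traj_of_paths M).
Proof.
rewrite (reindex traj_of_paths) //.
exists (fun tr : traj n H => [ffun e => edge_path tr e]).
- by move=> M _; apply/ffunP => e; rewrite ffunE edge_path_of_paths.
- by move=> tr _; apply/ffunP => i; apply/ffunP => e; rewrite !ffunE.
Qed.

Lemma if_forall_prod (I : finType) (b : pred I) (f : I -> R) :
  (if [forall i, b i] then \prod_i f i else 0) = \prod_i (if b i then f i else 0).
Proof.
case: ifP => [/forallP Hb | /negbT]; first by apply: eq_bigr => i _; rewrite Hb.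
rewrite negb_forall => /existsP [i /negbTE Hi].
by rewrite (bigD1 i) //= Hi mul0r.
Qed.

Lemma Prob_independent (E : traj n H -> bool) (P : edge n -> pred {ffun 'I_H.+1 -> bool}) :
  (forall tr, E tr = [forall e, P e (edge_path tr e)]) ->
  Prob p q E = \prod_(e : edge n) \sum_(y : {ffun 'I_H.+1 -> bool}) (if P e y then pair_weight y else 0).
Proof.
move=> HE; rewrite /Prob Rsum_finE sum_traj bigA_distr_bigA /=.
apply: eq_bigr => M _; rewrite HE traj_weightE R0_zero if_forall_prod.
by apply: eq_bigr => e _; rewrite edge_path_of_paths.
Qed.

Lemma Prob_true : Prob p q (fun _ : traj n H => true) = 1.
Proof.
rewrite (@Prob_independent _ (fun _ _ => true)); last by move=> tr; apply/esym/forallP.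
by rewrite big1 // => e _; rewrite pair_mass.
Qed.

Lemma Prob_false : Prob p q (fun _ : traj n H => false) = 0.
Proof. by rewrite /Prob Rsum_finE big1. Qed.

Lemma Prob_edges_present t (A : {set edge n}) : p + q != 0 -> (t <= H)%N ->
  Prob p q (fun tr : traj n H => [forall e in A, Gat tr t e]) = phat p q ^+ #|A|.
Proof.
move=> pq0 tH.
rewrite (@Prob_independent _ (fun e y => (e \in A) ==> path_at false y t)); last first.
  by move=> tr; apply: eq_forallb => e; rewrite Gat_edge_path.
rewrite -prodr_const [RHS]big_mkcond /=; apply: eq_bigr => e _.
by case: (e \in A) => /=; [exact: pair_marginal | exact: pair_mass].
Qed.

Hypotheses (p_pos : 0 < p) (p_le1 : p <= 1) (q_pos : 0 < q) (q_le1 : q <= 1).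

Lemma pq_neq0 : p + q != 0.
Proof. by rewrite gt_eqF // addr_gt0. Qed.

Lemma phat_ge0 : 0 <= phat p q.
Proof. by rewrite /phat RdivE RplusE divr_ge0 ?ltW ?addr_gt0. Qed.

Lemma phat_le1 : phat p q <= 1.
Proof. by rewrite /phat RdivE RplusE ler_pdivrMr ?addr_gt0 // mul1r lerDl ltW. Qed.

Lemma pair_weight_ge0 (y : {ffun 'I_H.+1 -> bool}) : 0 <= pair_weight y.
Proof.
rewrite /path_weight mulr_ge0 //.
  by case: (path_at _ y 0); rewrite /init_prob ?R1_one ?RminusE ?subr_ge0 ?phat_ge0 ?phat_le1.
apply: prodr_ge0 => t _.
by case: (path_at _ y t); case: (path_at _ y t.+1);
  rewrite /= ?R1_one ?RminusE ?subr_ge0 //; exact: ltW.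
Qed.

Lemma Prob_union (I : finType) (B : I -> traj n H -> bool) (E : traj n H -> bool) :
  (forall tr, ~~ E tr -> exists i, B i tr) ->
  1 - \sum_(i : I) Prob p q (B i) <= Prob p q E.
Proof.
move=> EB.
have weight_ge0 (tr : traj n H) : 0 <= traj_weight p q tr.
  by rewrite traj_weightE; apply: prodr_ge0 => e _; apply: pair_weight_ge0.
have summand_ge0 (F : traj n H -> bool) tr : 0 <= if F tr then traj_weight p q tr else R0.
  by case: ifP.
rewrite -Prob_true lerBlDr /Prob !Rsum_finE.
under [X in _ <= _ + X]eq_bigr do rewrite Rsum_finE.
rewrite [X in _ <= _ + X]exchange_big /= -big_split /=; apply: ler_sum => tr _.
case: ifP => HE; first by rewrite lerDl sumr_ge0.
have [i Bi] := EB tr (negbT HE).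
by rewrite R0_zero add0r (bigD1 i) //= Bi lerDl sumr_ge0.
Qed.

End EdgeMEG.

Section Flooding.
Local Open Scope nat_scope.

Lemma exists_subset_card (T : finType) (A : {set T}) k : k <= #|A| ->
  exists2 S : {set T}, S \subset A & #|S| = k.
Proof.
elim: k => [|k IH] kA; first by exists set0; rewrite ?sub0set ?cards0.
have [S SA cS] := IH (ltnW kA).
have : A :\: S != set0.
  by rewrite -card_gt0 cardsD (setIidPr SA) cS subn_gt0.
case/set0Pn => x; rewrite inE => /andP[xS xA].
by exists (x |: S); rewrite ?subUset ?sub1set ?xA ?cardsU1 ?xS ?cS.
Qed.

Lemma card_bigcup_le (T I : finType) (P : pred I) (F : I -> {set T}) :
  #|\bigcup_(i | P i) F i| <= \sum_(i | P i) #|F i|.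
Proof.
apply: (big_ind2 (fun (A : {set T}) m => #|A| <= m)) => [|A1 m1 A2 m2 h1 h2|//].
  by rewrite cards0.
by rewrite (leq_trans (leq_card_setU A1 A2)) ?leq_add.
Qed.

Variable n : nat.

Definition joins (e : edge n) (u v : 'I_n) : bool := (val e == (u, v)) || (val e == (v, u)).

Lemma joins_eq (e e' : edge n) u v : joins e u v -> joins e' u v -> e = e'.
Proof.
have lt_asym (x y : 'I_n) : (x < y)%N -> (y < x)%N -> False.
  by move=> xy /(ltn_trans xy); rewrite ltnn.
move: (valP e) (valP e') => lte lte' /orP[]/eqP he /orP[]/eqP he'; apply: val_inj;
  rewrite he he' // in lte lte' *; by case: (lt_asym _ _ lte lte').
Qed.

Lemma joins_exists (u v : 'I_n) : u != v -> exists e : edge n, joins e u v.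
Proof.
move=> uv; case: (ltngtP u v) => h.
- by exists (exist _ (u, v) h); rewrite /joins eqxx.
- by exists (exist _ (v, u) h); rewrite /joins eqxx orbT.
- by move: uv; rewrite (val_inj h) eqxx.
Qed.

Definition nbr (G : graph n) (u : 'I_n) : {set 'I_n} := [set v | adj G u v].

Lemma adj_irrefl (G : graph n) u : adj G u u = false.
Proof.
apply/negbTE/existsP => -[e /andP[_ /orP[] /eqP h]];
  by move: (valP e); rewrite h ltnn.
Qed.

Definition star (v : 'I_n) (S : {set 'I_n}) : {set edge n} :=
  [set e | [exists u in S, joins e v u]].

Lemma card_star v (S : {set 'I_n}) : v \notin S -> #|S| <= #|star v S|.
Proof.
move=> vS; pose other (e : edge n) := if (val e).1 == v then (val e).2 else (val e).1.
apply: leq_trans (leq_imset_card other (star v S)); apply: subset_leq_card.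
apply/subsetP => u uS; have vu : v != u by apply: contraNneq vS => ->.
have [e ve] := joins_exists vu.
apply/imsetP; exists e; first by rewrite inE; apply/existsP; exists u; rewrite uS.
by rewrite /other; case/orP: ve => /eqP -> /=; rewrite ?eqxx // eq_sym (negbTE vu).
Qed.

Lemma high_degree_star (G : graph n) u D : D <= #|nbr G u| ->
  exists S : {set 'I_n}, [/\ u \notin S, #|S| = D & [forall e in star u S, G e]].
Proof.
move=> Du; have [S SN cS] := exists_subset_card Du.
exists S; split => //.
  by apply/negP => /(subsetP SN); rewrite inE adj_irrefl.
apply/forall_inP => e; rewrite inE => /existsP[w /andP[wS ew]].
move: (subsetP SN w wS); rewrite inE => /existsP[e' /andP[Ge' e'w]].
by rewrite (joins_eq ew e'w).
Qed.

Lemma flood_step_sub H (tr : traj n H) s t :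
  flood tr s t.+1 \subset \bigcup_(u in flood tr s t) (u |: nbr (Gat tr t) u).
Proof.
apply/subsetP => v /setUP[vI | ]; first by apply/bigcupP; exists v; rewrite ?setU11.
rewrite inE => /andP[_ /existsP[u /andP[uI uv]]].
by apply/bigcupP; exists u; rewrite // !inE uv orbT.
Qed.

Lemma flood_growth H (tr : traj n H) s D T :
  (forall t, t < T -> forall u, #|nbr (Gat tr t) u| < D) ->
  forall t, t <= T -> #|flood tr s t| <= D ^ t.
Proof.
move=> lowdeg; elim=> [|t IH] tT; first by rewrite cards1.
rewrite (leq_trans (subset_leq_card (flood_step_sub tr s t))) //.
rewrite (leq_trans (card_bigcup_le _ _)) // expnSr.
rewrite (leq_trans _ (leq_mul (IH (ltnW tT)) (leqnn D))) // -sum_nat_const.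
apply: leq_sum => u _; rewrite cardsU1.
by rewrite (leq_trans (leq_add (leq_b1 _) (leqnn _))) // add1n lowdeg.
Qed.

Lemma low_degree_slow_flooding H (tr : traj n H) D (x : R) : 0 < n ->
  (forall t, t < H -> forall u, #|nbr (Gat tr t) u| < D) ->
  (forall t, t <= H -> Rlt (INR t) x -> D ^ t < n) ->
  flood_time_ge x tr.
Proof.
move=> n0 lowdeg small; apply/existsP; exists (Ordinal n0); apply/forallP => t.
apply/implyP => /Rltb_lt tx; apply/eqP => full.
have := flood_growth (Ordinal n0) lowdeg (ltn_ord t).
by rewrite full cardsT card_ord leqNgt small // -ltnS.
Qed.

End Flooding.

Section StarBound.
Local Open Scope ring_scope.
Variables (n H : nat) (p q : R).
Hypotheses (p_pos : 0 < p) (p_le1 : p <= 1) (q_pos : 0 < q) (q_le1 : q <= 1).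

Definition star_event D (i : 'I_H * 'I_n * {set 'I_n}) (tr : traj n H) : bool :=
  let: (t, v, U) := i in
  [&& v \notin U, #|U| == D & [forall e in star v U, Gat tr t e]].

Lemma star_event_prob D i :
  Prob p q (star_event D i) <= if #|i.2| == D then phat p q ^+ D else 0.
Proof.
case: i => [[t v] U] /=; rewrite /star_event.
case: (boolP (v \notin U)) => [vU | _]; last first.
  by rewrite Prob_false; case: ifP => // _; rewrite exprn_ge0 ?phat_ge0.
case: (boolP (#|U| == D)) => [/eqP UD | _]; last by rewrite Prob_false.
rewrite Prob_edges_present ?pq_neq0 //; last exact: ltnW.
by apply: ler_wiXn2l; [exact: phat_ge0 | exact: phat_le1 | rewrite -UD card_star].
Qed.

Lemma sum_dsets (c : R) D :
  \sum_(U : {set 'I_n}) (if #|U| == D then c else 0) = 'C(n, D)%:R * c.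
Proof.
rewrite -big_mkcond /= sumr_const mulr_natl; congr (_ *+ _).
by rewrite -[in RHS](card_ord n) -card_draws; apply: eq_card => U; rewrite inE.
Qed.

(* Every trajectory without a present star of size [D] at a time [t < H]
   floods slowly; the union bound over the [H n C(n, D)] stars gives the
   probability estimate. *)
Lemma slow_flooding_prob x D : (0 < n)%N ->
  (forall t, (t <= H)%N -> Rlt (INR t) x -> (D ^ t < n)%N) ->
  1 - (H * n)%:R * 'C(n, D)%:R * phat p q ^+ D <= Prob p q (@flood_time_ge n H x).
Proof.
move=> n0 small.
apply: le_trans (Prob_union p_pos p_le1 q_pos q_le1 (B := star_event D) _).
  rewrite lerB // (le_trans (ler_sum _ (fun i _ => star_event_prob D i))) //.
  rewrite -(pair_bigA _ (fun tv (U : {set 'I_n}) => if #|U| == D then phat p q ^+ D else 0)) /=.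
  under eq_bigr do rewrite sum_dsets.
  by rewrite sumr_const card_prod !card_ord -[_ *+ (H * n)]mulr_natl mulrA.
move=> tr slow; apply/existsP; apply: contraNT slow => nostar.
apply: (low_degree_slow_flooding n0 _ small) => t tH u; rewrite ltnNge.
apply/negP => /high_degree_star[U [uU UD present]].
by apply: (negP nostar); apply/existsP; exists (Ordinal tH, u, U); rewrite /= uU UD eqxx.
Qed.

End StarBound.

Local Close Scope ring_scope.

Lemma INR_expn (m k : nat) : INR (m ^ k)%N = INR m ^ k.
Proof. by elim: k => [|k IH] //; rewrite expnS mult_INR IH. Qed.

Lemma exp_nat_mul (a : R) (k : nat) : exp (INR k * a) = exp a ^ k.
Proof.
elim: k => [|k IH]; first by rewrite Rmult_0_l exp_0.
by rewrite S_INR Rmult_plus_distr_r Rmult_1_l exp_plus IH /= Rmult_comm.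
Qed.

Lemma exp_nat_le_pow3 (k : nat) : exp (INR k) <= 3 ^ k.
Proof.
rewrite -[INR k]Rmult_1_r exp_nat_mul; apply: pow_incr.
by split; [apply: Rlt_le; apply: exp_pos | exact: exp_le_3].
Qed.

Lemma div_mul_cancel (a b : R) : b <> 0 -> a / b * b = a.
Proof. by move=> b0; rewrite /Rdiv Rmult_assoc Rinv_l ?Rmult_1_r. Qed.

Lemma exp_le_mono (a b : R) : a <= b -> exp a <= exp b.
Proof. by case/Rle_lt_or_eq_dec => [/exp_increasing/Rlt_le | ->] //; exact: Rle_refl. Qed.

Lemma ln_ge_of_exp_le (a y : R) : exp a <= y -> a <= ln y.
Proof.
move=> ay; have y0 : 0 < y by apply: Rlt_le_trans (exp_pos a) ay.
apply: Rnot_lt_le => /exp_increasing; rewrite exp_ln //; lra.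
Qed.

Lemma ln_ge10 (y : R) : 3 ^ 10 <= y -> 10 <= ln y.
Proof.
move=> y_big; apply: ln_ge_of_exp_le; apply: Rle_trans y_big.
by have := exp_nat_le_pow3 10; rewrite (_ : INR 10 = 10) //=; lra.
Qed.

Lemma up_nat_bounds (r : R) : 0 < r ->
  r < INR (Z.to_nat (up r)) /\ INR (Z.to_nat (up r)) <= r + 1.
Proof.
move=> r0; have [h1 h2] := archimed r.
have hz : Z.le 0 (up r) by apply: le_IZR; lra.
by rewrite INR_IZR_INZ Znat.Z2Nat.id //; lra.
Qed.

(* [(1 + 1/D)^D <= e], in the form [(D + 1)^D <= D^D e]. *)
Lemma succ_pow_le (D : nat) : (INR D + 1) ^ D <= INR D ^ D * exp 1.
Proof.
case: D => [|D]; first by rewrite /= Rmult_1_l; have := exp_ineq1_le 1; lra.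
set d := INR D.+1; have d0 : 0 < d by apply: lt_0_INR; lia.
have dn0 : d <> 0 := Rgt_not_eq _ _ d0.
have -> : d + 1 = d * (1 + / d) by rewrite Rmult_plus_distr_l Rmult_1_r Rinv_r.
rewrite Rpow_mult_distr; apply: Rmult_le_compat_l; first by apply: pow_le; lra.
have -> : exp 1 = exp (/ d) ^ D.+1 by rewrite -exp_nat_mul -/d Rinv_r.
apply: pow_incr; split; last exact: exp_ineq1_le.
by have := Rinv_0_lt_compat d d0; lra.
Qed.

Lemma pow_le_fact_exp (D : nat) : INR D ^ D <= INR D`! * exp (INR D).
Proof.
elim: D => [|D IH]; first by rewrite /= exp_0; lra.
rewrite factS mult_INR S_INR -tech_pow_Rmult exp_plus.
have D0 := pos_INR D; have e1 := exp_pos 1; have f0 := pos_INR D`!.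
apply: Rle_trans (Rmult_le_compat_l (INR D + 1) _ _ _ (succ_pow_le D)) _; first lra.
have := Rmult_le_compat_r (exp 1) _ _ (Rlt_le _ _ e1) IH.
by move/(Rmult_le_compat_l (INR D + 1)) => /(_ ltac:(lra)); lra.
Qed.

Lemma ffact_le_pow n m : (n ^_ m <= n ^ m)%N.
Proof.
have -> : (n ^ m = \prod_(i < m) n)%N by rewrite prod_nat_const card_ord.
by rewrite ffact_prod; apply: leq_prod => i _; apply: leq_subr.
Qed.

Lemma binom_fact_le n D : INR 'C(n, D) * INR D`! <= INR n ^ D.
Proof.
rewrite -mult_INR -INR_expn; apply/le_INR/ssrnat.leP.
by rewrite multE bin_ffact ffact_le_pow.
Qed.

(* The expected number of present stars of size [D >= 9 n ph] at a node is
   at most [3 ^ -D]: [C(n, D) ph^D <= (e n ph / D)^D <= 3^-D]. *)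
Lemma binom_tail n D ph : 0 <= ph -> 0 < INR n * ph -> 9 * (INR n * ph) <= INR D ->
  INR 'C(n, D) * ph ^ D * 3 ^ D <= 1.
Proof.
move=> ph0 mu0 muD; set C := INR 'C(n, D); set d := INR D in muD *.
have C0 : 0 <= C := pos_INR _.
have dD0 : 0 < d ^ D by apply: pow_lt; lra.
have e3 := exp_le_3; have e0 := exp_pos 1.
have CdD : C * d ^ D <= (INR n * exp 1) ^ D.
  rewrite Rpow_mult_distr -[exp 1 ^ D]exp_nat_mul Rmult_1_r.
  apply: Rle_trans (Rmult_le_compat_l C _ _ C0 (pow_le_fact_exp D)) _.
  rewrite -Rmult_assoc; apply: Rmult_le_compat_r; [exact: Rlt_le (exp_pos _) | exact: binom_fact_le].
have ph3 : 0 <= (ph * 3) ^ D by apply: pow_le; lra.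
have ne_d : (INR n * exp 1 * (ph * 3)) ^ D <= d ^ D.
  apply: pow_incr; split; first by apply: Rmult_le_pos; nra.
  have : INR n * ph * exp 1 <= INR n * ph * 3 by apply: Rmult_le_compat_l; lra.
  lra.
apply: (Rmult_le_reg_r _ _ _ dD0); rewrite Rmult_1_l.
apply: Rle_trans ne_d; rewrite Rpow_mult_distr.
have := Rmult_le_compat_r _ _ _ ph3 CdD; rewrite Rpow_mult_distr; lra.
Qed.

(* Below the horizon [L / (2 ln mu)], stars of size [D <= 9 mu + 1 <= mu^2]
   cannot inform more than [D^t < n] nodes. *)
Lemma star_powers_small (nR mu : R) (D t : nat) : 10 <= mu -> INR D <= 9 * mu + 1 ->
  INR t * (2 * ln mu) < ln nR -> 0 < nR -> INR D ^ t < nR.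
Proof.
move=> mu10 Dmu tmu nR0.
have mu_sq : exp (2 * ln mu) = mu ^ 2.
  by rewrite (_ : 2 * ln mu = ln mu + ln mu) ?exp_plus ?exp_ln /=; lra.
apply: Rle_lt_trans (_ : (mu ^ 2) ^ t < nR).
  by apply: pow_incr; split; [exact: pos_INR | nra].
by rewrite -mu_sq -exp_nat_mul -[X in _ < X](exp_ln nR) //; apply: exp_increasing.
Qed.

Lemma star_union_small (n H D : nat) (ph : R) : 3 ^ 10 <= INR n ->
  ln (INR n) <= INR n * ph -> 9 * (INR n * ph) <= INR D -> INR H <= INR n -> 0 <= ph ->
  INR (H * n) * INR 'C(n, D) * ph ^ D <= 1 / INR n.
Proof.
move=> nbig Lmu muD Hn ph0; set nR := INR n in nbig Lmu muD Hn *.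
have nR0 : 0 < nR by lra.
have L10 := ln_ge10 nbig.
set K := INR 'C(n, D) * ph ^ D.
have K0 : 0 <= K by apply: Rmult_le_pos; [exact: pos_INR | exact: pow_le].
have K3 : K * 3 ^ D <= 1 by apply: binom_tail => //; rewrite -/nR; lra.
have n9 : nR ^ 9 <= 3 ^ D.
  apply: Rle_trans (exp_nat_le_pow3 D).
  rewrite -{1}(exp_ln nR) // -exp_nat_mul; apply: exp_le_mono.
  by rewrite (_ : INR 9 = 9) //=; lra.
have n39 : nR ^ 3 <= nR ^ 9 by apply: Rle_pow; [lra | apply/ssrnat.leP].
have Kn3 : nR ^ 3 * K <= 1.
  by apply: Rle_trans K3; rewrite Rmult_comm; apply: Rmult_le_compat_l => //; lra.
rewrite Rmult_assoc -/K mult_INR -/nR; apply: (Rmult_le_reg_r _ _ _ nR0).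
rewrite /Rdiv Rmult_1_l Rinv_l; last exact: Rgt_not_eq.
have : INR H * nR * K * nR <= nR * nR * K * nR.
  by apply: Rmult_le_compat_r; [lra | apply: Rmult_le_compat_r => //; nra].
simpl in Kn3; lra.
Qed.

Lemma slow_flooding_probR (n H D : nat) (p q x : R) : 0 < p < 1 -> 0 < q < 1 -> (0 < n)%N ->
  (forall t, (t <= H)%N -> INR t < x -> (D ^ t < n)%N) ->
  1 - INR (H * n) * INR 'C(n, D) * phat p q ^ D <= Prob p q (@flood_time_ge n H x).
Proof.
move=> [p0 p1] [q0 q1] n0 small.
have /RleP := @slow_flooding_prob n H p q ltac:(exact/RltP) ltac:(exact/RleP/Rlt_le)
  ltac:(exact/RltP) ltac:(exact/RleP/Rlt_le) x D n0 small.
by rewrite -!INRE -RpowE.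
Qed.

Theorem mainTheorem14 :
  exists c C : R, (0 < c) /\ (0 < C) /\
  exists N : nat, forall n : nat, (N <= n)%coq_nat ->
  forall p q : R, (0 < p < 1) -> (0 < q < 1) ->
  (phat p q >= c * ln (INR n) / INR n) ->
  (flood_time_ge_prob n p q (C * ln (INR n) / ln (INR n * phat p q)) >= 1 - 1 / INR n).
Proof.
exists 1, (1 / 2); split; first lra; split; first lra.
exists (Nat.pow 3 10) => n nN p q p01 q01 ph_big.
set nR := INR n; set ph := phat p q; set L := ln nR; set mu := nR * ph.
have nbig : 3 ^ 10 <= nR.
  by have := le_INR _ _ nN; rewrite pow_INR (_ : INR 3 = 3) //=; lra.
have L10 : 10 <= L := ln_ge10 nbig.
have n0 : (0 < n)%N by apply/ssrnat.ltP; apply: INR_lt; rewrite -/nR /=; lra.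
have ph0 : 0 <= ph by apply/RleP; apply: phat_ge0; apply/RltP; [case: p01 | case: q01].
have nR0 : 0 < nR by lra.
have Lmu : L <= mu.
  have := Rmult_le_compat_r _ _ _ (Rlt_le _ _ nR0) (Rge_le _ _ ph_big).
  by rewrite -/nR -/ph -/L div_mul_cancel /mu; [lra | exact: Rgt_not_eq].
have lnmu1 : 1 <= ln mu by apply: ln_ge_of_exp_le; have := exp_le_3; lra.
set x := 1 / 2 * L / ln mu.
have xmu : x * ln mu = 1 / 2 * L.
  by rewrite /x div_mul_cancel //; apply: Rgt_not_eq; lra.
have x0 : 0 < x by nra.
have [Hx1 Hx2] := up_nat_bounds x0; set H := Z.to_nat (up x) in Hx1 Hx2 *.
have mu0 : 0 < 9 * mu by lra.
have [HD1 HD2] := up_nat_bounds mu0; set D := Z.to_nat (up (9 * mu)) in HD1 HD2 *.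
have growth : forall t, (t <= H)%N -> INR t < x -> (D ^ t < n)%N.
  move=> t _ tx; apply/ssrnat.ltP/INR_lt; rewrite INR_expn.
  by apply: (star_powers_small (mu := mu)); rewrite -/L -/nR; nra.
have Hn : INR H <= nR by have := exp_ineq1_le L; rewrite /L exp_ln -/L; nra.
have := star_union_small nbig Lmu (Rlt_le _ _ HD1) Hn ph0.
have := slow_flooding_probR p01 q01 n0 growth.
rewrite /flood_time_ge_prob -/H -/ph -/nR; lra.
Qed.
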